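(* There exists a completely regular space $X$ (for instance the Niemytzki plane) such that $\mathrm{H}_1(X,\mathbb R)\setminus \mathrm{K}_1^w(X,\mathbb R)\neq\emptyset$.
   Context: $\mathrm{H}_1(X,Y)$: mappings $f:X\to Y$ with $f^{-1}(V)$ an $F_\sigma$-set for every open $V\subseteq Y$. $\mathrm{K}_1^w(X,Y)$: mappings $f:X\to Y$ with $f^{-1}(V)$ a countable union of functionally closed subsets of $X$ for every functionally open $V\subseteq Y$ (functionally closed = zero set of a continuous real function; functionally open = complement of such). *)

From Stdlib Require Import Reals Lra Classical.
Open Scope R_scope.

Record TopSpace := {
  carrier :> Type;
  is_open : (carrier -> Prop) -> Prop;
  open_full : is_open (fun _ => True);
  open_inter : forall U V, is_open U -> is_open V -> is_open (fun x => U x /\ V x);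
  open_union : forall (Fam : (carrier -> Prop) -> Prop),
      (forall U, Fam U -> is_open U) -> is_open (fun x => exists U, Fam U /\ U x)
}.

Definition is_closed (X : TopSpace) (A : X -> Prop) : Prop :=
  is_open X (fun x => ~ A x).

Definition R_open (V : R -> Prop) : Prop :=
  forall x, V x -> exists eps, 0 < eps /\ forall y, Rabs (y - x) < eps -> V y.

Lemma R_open_full : R_open (fun _ => True).
Proof. intros x _; exists 1; split; [lra | auto]. Qed.

Lemma R_open_inter : forall U V, R_open U -> R_open V -> R_open (fun x => U x /\ V x).
Proof.
  intros U V HU HV x [Ux Vx].
  destruct (HU x Ux) as [e1 [He1 H1]]; destruct (HV x Vx) as [e2 [He2 H2]].
  exists (Rmin e1 e2); split; [apply Rmin_pos; auto|].
  intros y Hy; split; [apply H1 | apply H2];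
    eapply Rlt_le_trans; eauto; [apply Rmin_l | apply Rmin_r].
Qed.

Lemma R_open_union : forall (Fam : (R -> Prop) -> Prop),
    (forall U, Fam U -> R_open U) -> R_open (fun x => exists U, Fam U /\ U x).
Proof.
  intros Fam HF x [U [FU Ux]].
  destruct (HF U FU x Ux) as [e [He H]].
  exists e; split; auto. intros y Hy; exists U; split; auto.
Qed.

Definition R_top : TopSpace :=
  {| carrier := R; is_open := R_open; open_full := R_open_full;
     open_inter := R_open_inter; open_union := R_open_union |}.

Definition continuous (X Y : TopSpace) (f : X -> Y) : Prop :=
  forall V : Y -> Prop, is_open Y V -> is_open X (fun x => V (f x)).

Definition completely_regular (X : TopSpace) : Prop :=
  forall (F : X -> Prop) (x : X), is_closed X F -> ~ F x ->
    exists g : X -> R_top, continuous X R_top g /\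
      (forall y, 0 <= g y <= 1) /\ g x = 0 /\ (forall y, F y -> g y = 1).

Definition F_sigma (X : TopSpace) (A : X -> Prop) : Prop :=
  exists Fs : nat -> X -> Prop, (forall n, is_closed X (Fs n)) /\
    forall x, A x <-> exists n, Fs n x.

Definition functionally_closed (X : TopSpace) (A : X -> Prop) : Prop :=
  exists g : X -> R_top, continuous X R_top g /\ forall x, A x <-> g x = 0.

Definition functionally_open (X : TopSpace) (A : X -> Prop) : Prop :=
  functionally_closed X (fun x => ~ A x).

Definition H1 (X Y : TopSpace) (f : X -> Y) : Prop :=
  forall V : Y -> Prop, is_open Y V -> F_sigma X (fun x => V (f x)).

Definition K1w (X Y : TopSpace) (f : X -> Y) : Prop :=
  forall V : Y -> Prop, functionally_open Y V ->
    exists Fs : nat -> X -> Prop, (forall n, functionally_closed X (Fs n)) /\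
      forall x, V (f x) <-> exists n, Fs n x.

(** The space is a Psi-space over the Cantor tree: countably many isolated
    points (the nodes of the binary tree, coded by naturals) together with
    one point for every infinite branch [t : nat -> bool], whose basic
    neighbourhoods are the branch point plus a tail of the nodes on it.
    Distinct branches eventually share no nodes, so these neighbourhoods are
    clopen and the space is zero-dimensional, hence completely regular.  The
    nodes form a countable set of isolated points and the branch points a
    closed discrete set, so every subset is F_sigma and every real function
    is of the first Baire-type class H_1.

    A continuous [g] vanishes at a branch [t] iff its values along the nodes
    of [t] tend to 0.  Hence membership of [t] in a countable union of zero
    sets of [g_0, g_1, ...] is the statement
    "exists m, forall k, eventually |g_m (node n t)| < 1/(k+1)",
    which only depends on countably many bits of information about the
    nodes.  Coding these bits into the branch [t] itself and diagonalizing
    produces a set of branches that is not a countable union of zero sets;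
    its indicator function is in H_1 but not in K_1^w. *)

From Stdlib Require Import Reals.
From Stdlib Require Import Lra Lia Classical ClassicalEpsilon FunctionalExtensionality.
From Stdlib Require Import PropExtensionality Arith.Cantor.
Open Scope R_scope.

Definition eventually (P : nat -> Prop) : Prop :=
  exists N, forall n, (N <= n)%nat -> P n.

Lemma eventually_and (P Q : nat -> Prop) :
  eventually P -> eventually Q -> eventually (fun n => P n /\ Q n).
Proof.
  intros [N1 H1] [N2 H2]; exists (max N1 N2); intros n Hn.
  split; [apply H1 | apply H2]; lia.
Qed.

Lemma Un_cv_0_iff (u : nat -> R) :
  Un_cv u 0 <-> forall k, eventually (fun n => Rabs (u n) < / INR (S k)).
Proof.
  split.
  - intros Hu k.
    destruct (Hu (/ INR (S k))) as [N HN].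
    { apply Rlt_gt, Rinv_0_lt_compat, lt_0_INR; lia. }
    exists N; intros n Hn.
    specialize (HN n Hn); unfold Rdist in HN; rewrite Rminus_0_r in HN; exact HN.
  - intros Hu eps Heps.
    destruct (archimed_cor1 eps Heps) as [[|k] [Hk Hk0]]; [lia |].
    destruct (Hu k) as [N HN]; exists N; intros n Hn.
    unfold Rdist; rewrite Rminus_0_r; specialize (HN n Hn); lra.
Qed.

Lemma R_open_ball (c eps : R) : R_open (fun y => Rabs (y - c) < eps).
Proof.
  intros y Hy; exists (eps - Rabs (y - c)); split; [lra |].
  intros z Hz.
  pose proof (Rabs_triang (z - y) (y - c)) as Htri.
  replace (z - y + (y - c)) with (z - c) in Htri by ring; lra.
Qed.

Lemma continuous_sub_const (c : R) : continuous R_top R_top (fun y => y - c).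
Proof.
  intros V HV x Vx; destruct (HV (x - c) Vx) as [e [He H]].
  exists e; split; [exact He |]; intros y Hy; apply H.
  replace (y - c - (x - c)) with (y - x) by ring; exact Hy.
Qed.

Lemma functionally_open_neq (c : R) : functionally_open R_top (fun y => y <> c).
Proof.
  exists (fun y => y - c); split; [apply continuous_sub_const |].
  intro y; simpl; split; intro H; [apply NNPP in H; subst; ring | lra].
Qed.

Definition indicator {X : Type} (C : X -> Prop) (x : X) : R :=
  if excluded_middle_informative (C x) then 0 else 1.

Lemma indicator_neq_1 {X : Type} (C : X -> Prop) (x : X) : indicator C x <> 1 <-> C x.
Proof.
  unfold indicator; destruct (excluded_middle_informative (C x)) as [Cx | nCx].
  - split; [auto | lra].
  - split; [intro H; exfalso; apply H; reflexivity | contradiction].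
Qed.

Lemma is_open_ext (X : TopSpace) (U V : X -> Prop) :
  (forall x, U x <-> V x) -> is_open X U -> is_open X V.
Proof.
  intros HUV HU.
  replace V with U; [exact HU |].
  apply functional_extensionality; intro x; apply propositional_extensionality, HUV.
Qed.

Lemma continuous_indicator (X : TopSpace) (C : X -> Prop) :
  is_open X C -> is_closed X C -> continuous X R_top (indicator C).
Proof.
  intros HC HnC V _.
  set (Fam := fun U : X -> Prop => (V 0 /\ U = C) \/ (V 1 /\ U = fun x => ~ C x)).
  apply (is_open_ext X (fun x => exists U, Fam U /\ U x)).
  - unfold indicator; intro x.
    destruct (excluded_middle_informative (C x)) as [Cx | nCx]; split.
    + intros [U [[[V0 ->] | [_ ->]] Ux]]; tauto.
    + intro V0; exists C; split; [left |]; auto.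
    + intros [U [[[_ ->] | [V1 ->]] Ux]]; tauto.
    + intro V1; exists (fun x => ~ C x); split; [right |]; auto.
  - apply open_union; intros U [[_ ->] | [_ ->]]; assumption.
Qed.

Definition zero_dimensional (X : TopSpace) : Prop :=
  forall (U : X -> Prop) (x : X), is_open X U -> U x ->
    exists C, is_open X C /\ is_closed X C /\ C x /\ forall y, C y -> U y.

Lemma zero_dimensional_completely_regular (X : TopSpace) :
  zero_dimensional X -> completely_regular X.
Proof.
  intros H0 F x HF Fx.
  destruct (H0 (fun y => ~ F y) x HF Fx) as [C [HCo [HCc [Cx HCF]]]].
  exists (indicator C); split; [apply continuous_indicator; assumption |].
  unfold indicator; split; [| split].
  - intro y; destruct (excluded_middle_informative (C y)); lra.
  - destruct (excluded_middle_informative (C x)); tauto.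
  - intros y Fy; destruct (excluded_middle_informative (C y)) as [Cy |]; [| reflexivity].
    exfalso; exact (HCF y Cy Fy).
Qed.

(** The nodes of the binary tree are coded by naturals in heap order:
    [node n t] is the node at depth [n] on the branch [t]. *)
Fixpoint node (n : nat) (t : nat -> bool) : nat :=
  match n with
  | O => O
  | S m => (2 * node m t + (if t m then 2 else 1))%nat
  end.

Lemma node_ge (n : nat) (t : nat -> bool) : (n <= node n t)%nat.
Proof. induction n; simpl; [lia |]. destruct (t n); lia. Qed.

Lemma node_inj (m n : nat) (t u : nat -> bool) :
  node m t = node n u -> m = n /\ forall j, (j < m)%nat -> t j = u j.
Proof.
  revert n; induction m as [| m IH]; intros [| n] H; simpl in H.
  - split; [reflexivity | intros; lia].
  - destruct (u n); lia.
  - destruct (t m); lia.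
  - assert (Hm : node m t = node n u /\ t m = u n)
      by (destruct (t m), (u n); split; auto; lia).
    destruct Hm as [Hm Htu]; destruct (IH n Hm) as [-> Hj].
    split; [reflexivity |]; intros j Hjm.
    destruct (Nat.eq_dec j n) as [-> | ]; [exact Htu | apply Hj; lia].
Qed.

Lemma nodes_eventually_leave (t u : nat -> bool) :
  u <> t -> eventually (fun n => forall m, node n u <> node m t).
Proof.
  intro Hne.
  destruct (not_all_ex_not _ _ (fun H => Hne (functional_extensionality u t H)))
    as [k Hk].
  exists (S k); intros n Hn m Heq.
  destruct (node_inj n m u t Heq) as [_ Hj]; apply Hk, Hj; lia.
Qed.

Definition psi_open (U : nat + (nat -> bool) -> Prop) : Prop :=
  forall t, U (inr t) -> eventually (fun n => U (inl (node n t))).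

Lemma psi_open_full : psi_open (fun _ => True).
Proof. intros t _; exists O; auto. Qed.

Lemma psi_open_inter (U V : nat + (nat -> bool) -> Prop) :
  psi_open U -> psi_open V -> psi_open (fun x => U x /\ V x).
Proof. intros HU HV t [Ut Vt]; exact (eventually_and _ _ (HU t Ut) (HV t Vt)). Qed.

Lemma psi_open_union (Fam : (nat + (nat -> bool) -> Prop) -> Prop) :
  (forall U, Fam U -> psi_open U) -> psi_open (fun x => exists U, Fam U /\ U x).
Proof.
  intros HF t [U [FU Ut]]; destruct (HF U FU t Ut) as [N H].
  exists N; intros n Hn; exists U; auto.
Qed.

Definition Psi : TopSpace :=
  {| carrier := nat + (nat -> bool); is_open := psi_open; open_full := psi_open_full;
     open_inter := psi_open_inter; open_union := psi_open_union |}.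

Lemma Psi_closed_within_node (d : nat) (A : Psi -> Prop) :
  (forall x, A x -> x = inl d) -> is_closed Psi A.
Proof.
  intros HA t _; exists (S d); intros n Hn Hnode.
  pose proof (node_ge n t); specialize (HA _ Hnode); injection HA; lia.
Qed.

Lemma Psi_closed_branches (A : Psi -> Prop) :
  (forall d, ~ A (inl d)) -> is_closed Psi A.
Proof. intros HA t _; exists O; intros n _; apply HA. Qed.

Lemma Psi_F_sigma (A : Psi -> Prop) : F_sigma Psi A.
Proof.
  exists (fun n x => match n with
                     | O => match x with inl _ => False | inr _ => A x end
                     | S d => x = inl d /\ A x end).
  split.
  - intros [| d].
    + apply Psi_closed_branches; auto.
    + apply (Psi_closed_within_node d); tauto.
  - intros [d | t]; split.
    + intros Ad; exists (S d); auto.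
    + intros [[| d'] Hd]; [contradiction | destruct Hd as [-> ?]; auto].
    + intros At; exists O; auto.
    + intros [[| d'] Hd]; [exact Hd | destruct Hd as [Heq _]; discriminate].
Qed.

Definition branch_nbhd (t : nat -> bool) (N : nat) (y : Psi) : Prop :=
  y = inr t \/ exists n, (N <= n)%nat /\ y = inl (node n t).

Lemma branch_nbhd_open (t : nat -> bool) (N : nat) : is_open Psi (branch_nbhd t N).
Proof.
  intros u [Hu | [n [_ Hn]]]; [| discriminate].
  injection Hu as ->; exists N; intros n Hn; right; exists n; auto.
Qed.

Lemma branch_nbhd_closed (t : nat -> bool) (N : nat) : is_closed Psi (branch_nbhd t N).
Proof.
  intros u Hu.
  assert (Hne : u <> t) by (intros ->; apply Hu; left; reflexivity).
  destruct (nodes_eventually_leave t u Hne) as [M HM]; exists M.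
  intros n Hn [Heq | [m [_ Heq]]]; [discriminate |].
  injection Heq; apply (HM n Hn).
Qed.

Lemma Psi_zero_dimensional : zero_dimensional Psi.
Proof.
  intros U [d | t] HU Ux.
  - exists (fun y => y = inl d); split; [| split; [| split]].
    + intros t Ht; discriminate.
    + apply (Psi_closed_within_node d); auto.
    + reflexivity.
    + intros y ->; exact Ux.
  - destruct (HU t Ux) as [N HN].
    exists (branch_nbhd t N); split; [| split; [| split]].
    + apply branch_nbhd_open.
    + apply branch_nbhd_closed.
    + left; reflexivity.
    + intros y [-> | [n [Hn ->]]]; [exact Ux | exact (HN n Hn)].
Qed.

Lemma continuous_node_limit (g : Psi -> R_top) (t : nat -> bool) :
  continuous Psi R_top g -> Un_cv (fun n => g (inl (node n t))) (g (inr t)).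
Proof.
  intros Hg eps Heps.
  assert (Ht : Rabs (g (inr t) - g (inr t)) < eps) by (rewrite Rminus_diag, Rabs_R0; lra).
  destruct (Hg _ (R_open_ball (g (inr t)) eps) t Ht) as [N HN].
  exists N; intros n Hn; exact (HN n Hn).
Qed.

Lemma continuous_zero_iff (g : Psi -> R_top) (t : nat -> bool) :
  continuous Psi R_top g ->
  g (inr t) = 0 <-> forall k, eventually (fun n => Rabs (g (inl (node n t))) < / INR (S k)).
Proof.
  intro Hg; rewrite <- Un_cv_0_iff; split.
  - intro H0; rewrite <- H0; apply continuous_node_limit, Hg.
  - intro H0; exact (UL_sequence _ _ _ (continuous_node_limit g t Hg) H0).
Qed.

Definition code (t : nat -> bool) (m k i : nat) : Prop :=
  t (to_nat (m, to_nat (k, i))) = true.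

Lemma code_surj (c : nat -> nat -> nat -> Prop) :
  exists t, forall m k i, code t m k i <-> c m k i.
Proof.
  exists (fun j => let (m, r) := of_nat j in let (k, i) := of_nat r in
          if excluded_middle_informative (c m k i) then true else false).
  intros m k i; unfold code; rewrite !cancel_of_to.
  destruct (excluded_middle_informative (c m k i)); split; auto; discriminate.
Qed.

Definition vanishes_along (c : nat -> nat -> nat -> Prop) (t : nat -> bool) : Prop :=
  exists m, forall k, eventually (fun n => c m k (node n t)).

Definition diagonal_branch (t : nat -> bool) : Prop := ~ vanishes_along (code t) t.

Lemma vanishes_along_ext (c c' : nat -> nat -> nat -> Prop) (t : nat -> bool) :
  (forall m k i, c m k i <-> c' m k i) -> vanishes_along c t <-> vanishes_along c' t.
Proof.
  intro Hc; unfold vanishes_along, eventually.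
  split; intros [m Hm]; exists m; intro k; destruct (Hm k) as [N HN];
    exists N; intros n Hn; apply Hc, HN, Hn.
Qed.

Lemma union_zero_sets_vanishes_along (G : nat -> Psi -> R_top) (t : nat -> bool) :
  (forall m, continuous Psi R_top (G m)) ->
  (exists m, G m (inr t) = 0) <->
  vanishes_along (fun m k i => Rabs (G m (inl i)) < / INR (S k)) t.
Proof.
  intro HG; unfold vanishes_along.
  split; intros [m Hm]; exists m; apply (continuous_zero_iff (G m) t (HG m)), Hm.
Qed.

Lemma diagonal_not_union_zero_sets (G : nat -> Psi -> R_top) :
  (forall m, continuous Psi R_top (G m)) ->
  ~ (forall t, diagonal_branch t <-> exists m, G m (inr t) = 0).
Proof.
  intros HG Hdiag.
  destruct (code_surj (fun m k i => Rabs (G m (inl i)) < / INR (S k))) as [t Ht].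
  specialize (Hdiag t); unfold diagonal_branch in Hdiag.
  rewrite union_zero_sets_vanishes_along, (vanishes_along_ext _ _ t Ht) in Hdiag by exact HG.
  tauto.
Qed.

Theorem mainTheorem4 :
  exists X : TopSpace, completely_regular X /\
    exists f : X -> R_top, H1 X R_top f /\ ~ K1w X R_top f.
Proof.
  exists Psi; split.
  { apply zero_dimensional_completely_regular, Psi_zero_dimensional. }
  set (A := fun x : Psi => match x with inl _ => False | inr t => diagonal_branch t end).
  exists (indicator A); split.
  { intros V _; apply Psi_F_sigma. }
  intro HK.
  destruct (HK _ (functionally_open_neq 1)) as [Fs [HFs HA]].
  destruct (choice _ HFs) as [G HG].
  apply (diagonal_not_union_zero_sets G); [intro m; apply HG |].
  intro t.
  change (A (inr t) <-> exists m, G m (inr t) = 0).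
  rewrite <- (indicator_neq_1 A (inr t)); apply (iff_trans (HA (inr t))).
  split; intros [m Hm]; exists m; apply (proj2 (HG m)), Hm.
Qed.
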